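(* For every $u\in S_n$ and every $J\subseteq[n]$, \[ \mathrm{wt}(\Delta_J u)=t^{\mathrm{des}(u)}q^{\mathrm{maj}(u)}\prod_{j\in J\,\triangle\,\mathrm{Des}(u)} tq^j,\] where $J\triangle\mathrm{Des}(u)=(J\cup\mathrm{Des}(u))\setminus(J\cap\mathrm{Des}(u))$ is the symmetric difference.
   Context: $S_n$ is the set of permutations of $[n]=\{1,\dots,n\}$, written as words $u=u_1\cdots u_n$, and regarded as elements of $B_n$ with all letters positive. $B_n$ is the set of signed permutations: words $w=w_1\cdots w_n$ on the alphabet $\{\bar 1,1,\dots,\bar n,n\}$ (where $\bar i=-i$, $\bar{\bar i}=i$) such that $|w_1|\cdots|w_n|$ is a permutation in $S_n$. The alphabet is totally ordered by $\bar 1<\bar 2<\cdots<\bar n<1<2<\cdots<n$. For a word $w$ over a totally ordered alphabet, $\mathrm{Des}(w)=\{i: w_i>w_{i+1}\}$, $\mathrm{des}(w)=|\mathrm{Des}(w)|$, and $\mathrm{maj}(w)=\sum_{i\in\mathrm{Des}(w)} i$. For $w\in B_n$: $\mathrm{fdes}(w)=2\,\mathrm{des}(w)+1$ if $w_1<0$ and $\mathrm{fdes}(w)=2\,\mathrm{des}(w)$ if $w_1>0$; $\mathrm{fmaj}(w)=2\,\mathrm{maj}(w)+|\{i:w_i<0\}|$; $\mathrm{wt}(w)=t^{\mathrm{fdes}(w)}q^{\mathrm{fmaj}(w)}$. For $1\le i\le n$, $\Delta_i w=\overline{w_1}\cdots\overline{w_i}\,w_{i+1}\cdots w_n$ (negate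 the first $i$ letters). These operators commute, and for $J=\{j_1<\cdots<j_k\}\subseteq[n]$, $\Delta_J=\Delta_{j_1}\cdots\Delta_{j_k}$ ($\Delta_\emptyset$ is the identity). *)

From HB Require Import structures.
From mathcomp Require Import all_boot all_order all_algebra.
Set Implicit Arguments. Unset Strict Implicit. Unset Printing Implicit Defensive.
Import Order.TTheory GRing.Theory Num.Theory.
Local Open Scope ring_scope.

(* Letters of signed permutations are nonzero integers; -i stands for \bar i.
   Total order  \bar 1 < \bar 2 < ... < \bar n < 1 < 2 < ... < n  :
   ltB x y  <=>  x is strictly smaller than y in this order. *)
Definition ltB (x y : int) : bool :=
  if (x < 0) && (y < 0) then y < x
  else if x < 0 then true
  else if y < 0 then false
  else x < y.

(* Descent set of a word w of length n, as a subset of [n] = {1..n} inside 'I_n.+1: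
   i \in Des(w) iff 1 <= i < n and w_i > w_{i+1} (1-indexed). *)
Definition DesS (n : nat) (w : seq int) : {set 'I_n.+1} :=
  [set i : 'I_n.+1 | (0 < i < n)%N && ltB (nth 0 w i) (nth 0 w i.-1)].

Definition des (n : nat) (w : seq int) : nat := #|DesS n w|.
Definition maj (n : nat) (w : seq int) : nat := (\sum_(i in DesS n w) (i : nat))%N.

Definition fdes (n : nat) (w : seq int) : nat :=
  ((des n w).*2 + (nth (0:int) w 0 < 0)%R)%N.
Definition fmaj (n : nat) (w : seq int) : nat :=
  ((maj n w).*2 + count (fun x : int => (x < 0)%R) w)%N.

Definition wt (R : comPzRingType) (n : nat) (t q : R) (w : seq int) : R :=
  t ^+ fdes n w * q ^+ fmaj n w.

Definition Delta (i : nat) (w : seq int) : seq int :=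
  [seq (if (p.1 < i)%N then - p.2 else p.2) | p <- zip (iota 0 (size w)) w].

(* Delta_J = Delta_{j1} ... Delta_{jk} for J = {j1 < ... < jk} *)
Definition DeltaJ (n : nat) (J : {set 'I_n.+1}) (w : seq int) : seq int :=
  foldr Delta w (sort leq (map (fun j : 'I_n.+1 => nat_of_ord j) (enum J))).

Definition inSn (n : nat) (u : seq int) : Prop :=
  perm_eq u [seq (i%:Z) | i <- iota 1 n].

From HB Require Import structures.
From mathcomp Require Import all_boot all_order all_algebra zify.
Set Implicit Arguments.
Unset Strict Implicit.
Unset Printing Implicit Defensive.
Import Order.TTheory GRing.Theory Num.Theory.
Local Open Scope ring_scope.

(* A signed copy [signed e w] of a word w negates its p-th letter (0-indexed)
   exactly when e p holds.  Delta_i is the signing by [p < i], so Delta_J u is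
   the signing of u by the parity of the number of elements of J above p
   (foldr_Delta).  When u has positive letters, the descents of a signed copy
   are read off from e: at a sign change the descent is decided by the sign of
   the right-hand letter, elsewhere it is a descent of u (mem_DesS_signed), and
   the negative letters are counted by e (count_neg_signed).
   Adding to J an element j below all its elements negates the first j letters,
   which then share a common sign s.  This toggles j in the descent set and
   changes fdes and fmaj exactly as toggling j in J (+) Des(u) changes the
   cardinality and the sum of that symmetric difference (stats_step).
   Induction along the sorted list of J (stats_parity_above) yields
     fdes (Delta_J u) = des u + #|J (+) Des u|,
     fmaj (Delta_J u) = maj u + sum_(j in J (+) Des u) j,
   and the weight identity lemma9 is a rearrangement of these exponents. *)

Definition sg (s : bool) (x : int) : int := if s then - x else x.

Definition signed (e : nat -> bool) (w : seq int) : seq int :=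
  [seq sg (e p.1) p.2 | p <- zip (iota 0 (size w)) w].

Lemma Delta_signed i w : Delta i w = signed (fun p => (p < i)%N) w.
Proof. by []. Qed.

Lemma sg_sg s s' x : sg s (sg s' x) = sg (s (+) s') x.
Proof. by case: s; case: s' => //=; rewrite opprK. Qed.

Lemma sg_lt0 s (a : int) : 0 < a -> (sg s a < 0) = s.
Proof.
by move=> a_gt0; case: s; rewrite /= ?oppr_lt0 ?a_gt0 ?(lt_gtF a_gt0).
Qed.

Lemma ltB_sg s s' (a b : int) : 0 < a -> 0 < b ->
  ltB (sg s a) (sg s' b) = if s == s' then a < b else s.
Proof.
move=> a_gt0 b_gt0; rewrite /ltB !sg_lt0 //.
by case: s; case: s' => //=; rewrite ltrN2.
Qed.

Lemma size_signed e w : size (signed e w) = size w.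
Proof. by rewrite size_map size_zip size_iota minnn. Qed.

Lemma nth_signed e w p : nth 0 (signed e w) p = sg (e p) (nth 0 w p).
Proof.
have [lt_pw|le_wp] := ltnP p (size w).
  rewrite (nth_map (0%N, 0)) ?size_zip ?size_iota ?minnn //.
  by rewrite nth_zip ?size_iota // nth_iota.
by rewrite !nth_default ?size_signed //; case: (e p); rewrite /= ?oppr0.
Qed.

Lemma eq_signed e f w : e =1 f -> signed e w = signed f w.
Proof. by move=> ef; apply: eq_map => -[p x] /=; rewrite ef. Qed.

Lemma signed_signed e f w :
  signed e (signed f w) = signed (fun p => e p (+) f p) w.
Proof.
apply: (@eq_from_nth _ 0); rewrite ?size_signed // => p _.
by rewrite !nth_signed sg_sg.
Qed.

Lemma signed_false w : signed (fun=> false) w = w.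
Proof.
apply: (@eq_from_nth _ 0); rewrite ?size_signed // => p _.
by rewrite nth_signed.
Qed.

Definition parity_above (js : seq nat) (p : nat) : bool :=
  odd (count (fun k => p < k)%N js).

Lemma foldr_Delta js w : foldr Delta w js = signed (parity_above js) w.
Proof.
elim: js => [|k js IH] /=.
  by rewrite (@eq_signed _ (fun=> false)) ?signed_false.
rewrite IH Delta_signed signed_signed; apply: eq_signed => p.
by rewrite /parity_above /= oddD oddb.
Qed.

Lemma sum_toggle (T : finType) (A B : {set T}) (x : T) (f : T -> nat) :
  A :\ x = B :\ x ->
  (\sum_(i in A) f i + (x \in B) * f x = \sum_(i in B) f i + (x \in A) * f x)%N.
Proof.
have split_x (C : {set T}) :
    (\sum_(i in C) f i = (x \in C) * f x + \sum_(i in C :\ x) f i)%N.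
  have [xC|xNC] := boolP (x \in C); first by rewrite (big_setD1 _ xC) mul1n.
  rewrite mul0n add0n; apply: eq_bigl => i; rewrite in_setD1.
  by case: eqVneq => // ->; apply/negbTE.
by move=> AB; rewrite [in LHS]split_x [in RHS]split_x AB; lia.
Qed.

Definition symdiff (T : finType) (A B : {set T}) : {set T} :=
  (A :|: B) :\: (A :&: B).

Lemma symdiff_add (T : finType) (K D : {set T}) (x : T) : x \notin K ->
  [/\ symdiff (x |: K) D :\ x = symdiff K D :\ x,
      (x \in symdiff K D) = (x \in D) &
      (x \in symdiff (x |: K) D) = (x \notin D)].
Proof.
move=> xNK; split; last 2 first.
- by rewrite !inE (negbTE xNK) /=; case: (x \in D).
- by rewrite !inE eqxx /=; case: (x \in D).
by apply/setP => i; rewrite !inE; case: eqVneq.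
Qed.

Section SignedCopies.
Variables (n : nat) (u : seq int).
Hypothesis size_u : size u = n.
Hypothesis u_pos : forall x, x \in u -> 0 < x.

Let nth_pos p : (p < n)%N -> 0 < nth 0 u p.
Proof. by move=> lt_pn; apply: u_pos; rewrite mem_nth ?size_u. Qed.

Lemma mem_DesS_signed e (i : 'I_n.+1) : (i \in DesS n (signed e u)) =
  (0 < i < n)%N && (if e i == e i.-1 then nth 0 u i < nth 0 u i.-1 else e i).
Proof.
rewrite inE !nth_signed; case/boolP: (0 < i < n)%N => //= /andP[_ lt_in].
by rewrite ltB_sg ?nth_pos // (leq_ltn_trans (leq_pred i) lt_in).
Qed.

Lemma mem_DesS (i : 'I_n.+1) :
  (i \in DesS n u) = (0 < i < n)%N && (nth 0 u i < nth 0 u i.-1).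
Proof. by have := mem_DesS_signed (fun=> false) i; rewrite signed_false. Qed.

Lemma count_neg_signed e :
  count (fun x => x < 0) (signed e u) = count e (iota 0 n).
Proof.
rewrite count_map -size_u.
rewrite -[in RHS](unzip1_zip (s := iota 0 (size u)) (t := u)) ?size_iota //.
rewrite count_map; apply: eq_in_count => -[p x] px_in /=.
have x_in : x \in u.
  rewrite -(unzip2_zip (s := iota 0 (size u)) (t := u)) ?size_iota //.
  exact: (map_f snd px_in).
by rewrite sg_lt0 ?u_pos.
Qed.

Lemma fdes_signed e :
  fdes n (signed e u) = ((des n (signed e u)).*2 + ((0 < n)%N && e 0%N))%N.
Proof.
rewrite /fdes nth_signed; case: (posnP n) => [n0|n_gt0] /=.
  by rewrite nth_default ?size_u ?n0 //; case: (e 0%N); rewrite /= ?oppr0.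
by rewrite sg_lt0 ?nth_pos.
Qed.

Lemma fmaj_signed e :
  fmaj n (signed e u) = ((maj n (signed e u)).*2 + count e (iota 0 n))%N.
Proof. by rewrite /fmaj count_neg_signed. Qed.

(* Inductive step: negate the first x letters of the signed copy by e, whose
   letters at positions 0..x all carry the sign s; when x = n the sign s must
   be positive, as happens when x is the largest element of J. *)
Section DeltaStep.
Variables (e : nat -> bool) (x : 'I_n.+1) (s : bool).
Hypothesis x_gt0 : (0 < x)%N.
Hypothesis e_prefix : forall p, (p <= x)%N -> e p = s.
Hypothesis x_last : (x < n)%N || ~~ s.

Local Notation e' := (fun p => (p < x)%N (+) e p).

Lemma DesS_step_off : DesS n (signed e' u) :\ x = DesS n (signed e u) :\ x.
Proof.
apply/setP => i; rewrite !in_setD1; have [//|ne_ix] /= := eqVneq i x.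
rewrite !mem_DesS_signed; case/boolP: (0 < i < n)%N => //= /andP[i_gt0 _].
have [lt_ix|le_xi] := ltnP i x.
  have lt_i1x : (i.-1 < x)%N by rewrite (leq_ltn_trans (leq_pred i) lt_ix).
  by rewrite lt_i1x !e_prefix ?eqxx // ltnW.
have lt_xi : (x < i)%N by rewrite ltn_neqAle eq_sym ne_ix.
suff -> : (i.-1 < x)%N = false by [].
by lia.
Qed.

Lemma DesS_step_at : (x \in DesS n (signed e' u)) = s.
Proof.
rewrite mem_DesS_signed ltnn ltn_predL x_gt0 /= !e_prefix ?leq_pred //.
by case: s x_last; rewrite ?andbT ?andbF ?orbT ?orbF.
Qed.

Lemma DesS_step_before : (x \in DesS n (signed e u)) = (x \in DesS n u).
Proof. by rewrite mem_DesS_signed mem_DesS !e_prefix ?leq_pred ?eqxx. Qed.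

(* The x negated letters all switch sign. *)
Lemma count_step :
  (count e' (iota 0 n) + (s * x).*2 = count e (iota 0 n) + x)%N.
Proof.
have le_xn : (x <= n)%N by rewrite -ltnS.
rewrite -[n in iota _ n](subnKC le_xn) !iotaD !count_cat add0n.
have count_const b (P : pred nat) : {in iota 0 x, P =1 fun=> b} ->
    count P (iota 0 x) = (b * x)%N.
  move=> Pb; rewrite (eq_in_count Pb).
  by case: (b); rewrite ?count_predT ?count_pred0 ?size_iota ?mul1n.
rewrite (count_const (~~ s)) => [|p]; last first.
  by rewrite mem_iota => /= lt_px; rewrite lt_px e_prefix // ltnW.
rewrite (count_const s) => [|p]; last first.
  by rewrite mem_iota => /= lt_px; rewrite e_prefix // ltnW.
rewrite (@eq_in_count _ _ e) => [|p]; last first.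
  by rewrite mem_iota => /andP[le_xp _]; rewrite ltnNge le_xp.
by case: s; rewrite /= ?mul1n ?mul0n -?addnn; lia.
Qed.

Lemma stats_step (S S' : {set 'I_n.+1}) :
  S' :\ x = S :\ x -> (x \in S) = (x \in DesS n u) ->
  (x \in S') = (x \notin DesS n u) ->
  fdes n (signed e u) = (des n u + #|S|)%N ->
  fmaj n (signed e u) = (maj n u + \sum_(i in S) (i : nat))%N ->
  fdes n (signed e' u) = (des n u + #|S'|)%N /\
  fmaj n (signed e' u) = (maj n u + \sum_(i in S') (i : nat))%N.
Proof.
move=> S_toggle xS xS'.
have n_gt0 : (0 < n)%N by rewrite (leq_trans x_gt0) // -ltnS.
have card_toggle (A B : {set 'I_n.+1}) : A :\ x = B :\ x ->
    (#|A| + (x \in B) = #|B| + (x \in A))%N.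
  by move=> AB; have := sum_toggle (fun=> 1%N) AB; rewrite !sum1_card !muln1.
have des_toggle : (des n (signed e' u) + (x \in DesS n (signed e u)) =
                   des n (signed e u) + (x \in DesS n (signed e' u)))%N.
  exact: card_toggle DesS_step_off.
have maj_toggle : (maj n (signed e' u) + (x \in DesS n (signed e u)) * x =
                   maj n (signed e u) + (x \in DesS n (signed e' u)) * x)%N.
  exact: sum_toggle DesS_step_off.
have card_S := card_toggle _ _ S_toggle.
have sum_S : (\sum_(i in S') (i : nat) + (x \in S) * x =
              \sum_(i in S) (i : nat) + (x \in S') * x)%N.
  exact: sum_toggle S_toggle.
move: des_toggle maj_toggle card_S sum_S count_step.
rewrite !fdes_signed !fmaj_signed n_gt0 x_gt0 !e_prefix //.
rewrite DesS_step_at DesS_step_before xS xS'.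
by case: s; case: (x \in DesS n u); rewrite /= ?mul1n ?mul0n -?addnn; lia.
Qed.

End DeltaStep.

Lemma stats_parity_above (js : seq nat) :
  sorted ltn js -> all (fun k => 0 < k <= n)%N js ->
  let S := symdiff [set i : 'I_n.+1 | (i : nat) \in js] (DesS n u) in
  fdes n (signed (parity_above js) u) = (des n u + #|S|)%N /\
  fmaj n (signed (parity_above js) u) = (maj n u + \sum_(i in S) (i : nat))%N.
Proof.
elim: js => [|j js IH] /= js_sorted js_range.
  have -> : symdiff [set i : 'I_n.+1 | (i : nat) \in [::]] (DesS n u) =
            DesS n u.
    by apply/setP => i; rewrite !inE.
  rewrite fdes_signed fmaj_signed andbF count_pred0.
  rewrite (@eq_signed _ (fun=> false)) // signed_false.
  by split; rewrite /= addn0 -addnn.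
move: js_range => /andP[/andP[j_gt0 j_le_n] js_range].
have js_gt : all (fun k => j < k)%N js := order_path_min ltn_trans js_sorted.
have [IHdes IHmaj] := IH (path_sorted js_sorted) js_range.
pose x : 'I_n.+1 := Ordinal (j_le_n : (j < n.+1)%N).
have xNK : x \notin [set i : 'I_n.+1 | (i : nat) \in js].
  by rewrite inE; apply/negP => /(allP js_gt); rewrite ltnn.
have -> : [set i : 'I_n.+1 | (i : nat) \in j :: js] =
          x |: [set i : 'I_n.+1 | (i : nat) \in js].
  by apply/setP => i; rewrite !inE.
have [S_toggle xS xS'] := symdiff_add (DesS n u) xNK.
rewrite (@eq_signed _ (fun p => (p < x)%N (+) parity_above js p)); last first.
  by move=> p; rewrite /parity_above /= oddD oddb.
have x_last : (x < n)%N || ~~ odd (size js).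
  case: js js_gt js_range {IH IHdes IHmaj js_sorted S_toggle xS xS' xNK}
    => [|k ks] /=; first by rewrite orbT.
  move=> /andP[lt_jk _] /andP[/andP[_ le_kn] _].
  by rewrite (leq_trans lt_jk le_kn).
have prefix (p : nat) : (p <= x)%N -> parity_above js p = odd (size js).
  move=> le_px; rewrite /parity_above; congr odd; apply/eqP; rewrite -all_count.
  by apply: sub_all js_gt => k; exact: leq_ltn_trans le_px.
exact: (stats_step (x := x) j_gt0 prefix x_last S_toggle xS xS' IHdes IHmaj).
Qed.

End SignedCopies.

Lemma inSn_size_pos n u :
  inSn n u -> size u = n /\ forall x, x \in u -> 0 < x.
Proof.
move=> u_Sn; split; first by rewrite (perm_size u_Sn) size_map size_iota.
move=> x; rewrite (perm_mem u_Sn) => /mapP[i]; rewrite mem_iota.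
by move=> /andP[i_gt0 _] ->; rewrite ltz_nat.
Qed.

Theorem lemma9 (R : comPzRingType) (t q : R) (n : nat) (u : seq int)
    (J : {set 'I_n.+1}) :
  inSn n u -> ord0 \notin J ->
  wt n t q (DeltaJ J u) =
    t ^+ des n u * q ^+ maj n u *
    \prod_(j in (J :|: DesS n u) :\: (J :&: DesS n u)) (t * q ^+ (j : nat)).
Proof.
move=> u_Sn J0; have [size_u u_pos] := inSn_size_pos u_Sn.
set js := sort leq (map (fun j : 'I_n.+1 => nat_of_ord j) (enum J)).
have js_sorted : sorted ltn js.
  rewrite ltn_sorted_uniq_leq sort_uniq sort_sorted ?andbT;
    last exact: leq_total.
  by rewrite (map_inj_uniq val_inj) enum_uniq.
have js_J : [set i : 'I_n.+1 | (i : nat) \in js] = J.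
  by apply/setP => i; rewrite inE mem_sort (mem_map val_inj) mem_enum.
have js_range : all (fun k => 0 < k <= n)%N js.
  apply/allP => k; rewrite mem_sort => /mapP[i]; rewrite mem_enum => iJ ->.
  rewrite -[(i <= n)%N]ltnS ltn_ord andbT lt0n; apply: contraNneq J0 => i0.
  by rewrite -[ord0](@val_inj _ _ _ i).
have [fdes_J fmaj_J] := stats_parity_above size_u u_pos js_sorted js_range.
rewrite /wt /DeltaJ foldr_Delta fdes_J fmaj_J js_J.
rewrite big_split prodr_const -(big_morph _ (exprD q) (expr0 q)) !exprD.
exact: mulrACA.
Qed.
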